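(* Let $p$ be an odd prime and let $k,n$ be positive integers. If either $k\equiv n\equiv 0\pmod{p-1}$ or $k\equiv n\equiv 1\pmod{p-1}$, then \[ B^{(-k)}_{n}\equiv 2\pmod p. \]
   Context: For any integer $k$, let $\mathrm{Li}_k(t)=\sum_{n=1}^{\infty} t^n/n^k$. The poly-Bernoulli numbers $B^{(k)}_n$ ($n\ge 0$) are defined by $\frac{\mathrm{Li}_k(1-e^{-t})}{1-e^{-t}}=\sum_{n=0}^{\infty}B^{(k)}_n\frac{t^n}{n!}$. For negative upper index these are integers. *)

From HB Require Import structures.
From mathcomp Require Import all_boot all_order all_algebra.
Set Implicit Arguments. Unset Strict Implicit. Unset Printing Implicit Defensive.
Import Order.TTheory GRing.Theory Num.Theory.
Local Open Scope ring_scope.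

Definition exp_neg_trunc (N : nat) : {poly rat} :=
  \sum_(i < N.+1) (((-1) ^+ i) / (i`!)%:R) *: 'X^i.

(* Poly-Bernoulli numbers B_n^{(k)} for any integer k, read off from the
   generating function
     Li_k(1-e^{-t}) / (1-e^{-t}) = sum_{m>=0} (1-e^{-t})^m / (m+1)^k
                                = sum_n B_n^{(k)} t^n / n!.
   Since (1-e^{-t})^m has order >= m in t, only m <= n contribute to the
   coefficient of t^n, and e^{-t} may be truncated at order n. *)
Definition polyBern (k : int) (n : nat) : rat :=
  (n`!)%:R *
  (\sum_(m < n.+1) (((m.+1)%:R : rat) ^ (- k)) *: (1 - exp_neg_trunc n) ^+ m)`_n.

(* Expanding (1 - e^{-t})^m binomially gives Kaneko's closed formula
     B_n^{(-k)} = (-1)^n sum_{m <= n} (m+1)^k sum_{j <= m} (-1)^j C(m, j) j^n,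
   so B_n^{(-k)} is an integer. The inner sum is (-1)^m m! S(n, m), hence modulo p
   only the terms m < p - 1 survive (the term m = p - 1 carries the factor p^k).
   All bases occurring there are either 0 or prime to p, so by Fermat both k and
   n may be replaced by any positive exponent congruent modulo p - 1 (the sign
   (-1)^n as well, p - 1 being even). This leaves B_1^{(-1)} = 2 and
   B_{p-1}^{(-(p-1))}, which is 1 - (p - 1) = 2 modulo p since j^(p-1) = [j != 0]. *)

From HB Require Import structures.
From mathcomp Require Import all_boot all_order all_algebra finfield.
From mathcomp Require Import ring.
Set Implicit Arguments.
Unset Strict Implicit.
Unset Printing Implicit Defensive.

Import Order.TTheory GRing.Theory Num.Theory.
Local Open Scope ring_scope.

Lemma sumr_ord_trunc (V : nmodType) (a b : nat) (F : nat -> V) :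
  (a <= b)%N -> (forall m, (a <= m < b)%N -> F m = 0) ->
  \sum_(m < b) F m = \sum_(m < a) F m.
Proof.
move=> le_ab F0; rewrite -(subnKC le_ab) big_split_ord /= [X in _ + X]big1 ?addr0 // => m _.
by apply: F0; rewrite leq_addr -ltn_subRL ltn_ord.
Qed.

Section AltBinomialSums.

Variable R : comNzRingType.

(* [altbin m n = (-1)^m m! S(n, m)], with S the Stirling numbers of the second kind. *)
Definition altbin (m n : nat) : R :=
  \sum_(j < m.+1) (-1) ^+ j * j%:R ^+ n *+ 'C(m, j).

Lemma altbin_widen m n M : (m < M)%N ->
  altbin m n = \sum_(j < M) (-1) ^+ j * j%:R ^+ n *+ 'C(m, j).
Proof.
move=> lt_mM; pose a j : R := (-1) ^+ j * j%:R ^+ n *+ 'C(m, j).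
rewrite (sumr_ord_trunc (F := a) lt_mM) // => j /andP[lt_mj _].
by rewrite /a bin_small ?mulr0n.
Qed.

Lemma altbinSS m n : altbin m.+1 n.+1 = m.+1%:R * (altbin m.+1 n - altbin m n).
Proof.
rewrite [altbin m n](altbin_widen n (leqnSn m.+1)) -sumrB mulr_sumr.
apply: eq_bigr => -[[|j] lt_j _] /=.
  by rewrite !expr0n !bin0 mulr0 mul0rn subrr mulr0.
have binS_diag : (j.+1%:R * 'C(m.+1, j.+1)%:R = m.+1%:R * 'C(m, j)%:R :> R).
  by rewrite -!natrM -mul_bin_diag.
rewrite -mulrnBr ?leq_bin2l // [in RHS]binS addKn.
rewrite -[_ *+ 'C(m.+1, _)]mulr_natr -[_ *+ 'C(m, j)]mulr_natr (exprSr _ n) -!mulrA.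
by rewrite binS_diag; ring.
Qed.

Lemma altbin0 m : altbin m 0 = (m == 0%N)%:R.
Proof.
transitivity ((1 - 1 : R) ^+ m); last by rewrite subrr expr0n.
by rewrite exprBn; apply: eq_bigr => j _; rewrite !expr1n !mulr1.
Qed.

Lemma altbin1 m : altbin m 1 = - (m == 1%N)%:R.
Proof.
case: m => [|m]; first by rewrite /altbin big_ord1 expr1 mulr0 mul0rn oppr0.
by rewrite altbinSS !altbin0 sub0r mulrN mulr_natr; case: m.
Qed.

Lemma altbin_small m n : (n < m)%N -> altbin m n = 0.
Proof.
elim: n m => [|n IHn] [|m] // lt_nm; first by rewrite altbin0.
by rewrite altbinSS !IHn ?subrr ?mulr0 // ltnW.
Qed.

Lemma altbin_pchar p m n : p \in [pchar R] -> (p <= m)%N -> altbin m n = 0.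
Proof.
move=> pcharRp; have p_gt0 := prime_gt0 (pcharf_prime pcharRp).
have m_gt0 k : (p <= k)%N -> (0 < k)%N by move/(leq_trans p_gt0).
elim: n m => [|n IHn] m le_pm; first by rewrite altbin0 eqn0Ngt m_gt0.
case: m le_pm => [|m] le_pm; first by have := m_gt0 _ le_pm.
rewrite altbinSS; have [def_p|ne_pm] := eqVneq p m.+1.
  by rewrite -def_p (pcharf0 pcharRp) mul0r.
have le_pm' : (p <= m)%N by rewrite -ltnS ltn_neqAle ne_pm le_pm.
by rewrite !IHn ?subrr ?mulr0 // ltnW.
Qed.

End AltBinomialSums.

Lemma rmorph_altbin (R S : comNzRingType) (f : {rmorphism R -> S}) m n :
  f (altbin R m n) = altbin S m n.
Proof.
rewrite rmorph_sum; apply: eq_bigr => j _.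
by rewrite rmorphMn rmorphM rmorphXn rmorphN1 rmorphXn rmorph_nat.
Qed.

Lemma coef_exp_neg_trunc N i : (i <= N)%N ->
  (exp_neg_trunc N)`_i = (-1) ^+ i / i`!%:R.
Proof.
move=> le_iN; rewrite /exp_neg_trunc -(poly_def N.+1 (fun i => (-1) ^+ i / i`!%:R)).
by rewrite coef_poly ltnS le_iN.
Qed.

Lemma coef_exp_neg_truncX N j i : (i <= N)%N ->
  (exp_neg_trunc N ^+ j)`_i = (- j%:R) ^+ i / i`!%:R.
Proof.
have fact_neq0 l : l`!%:R != 0 :> rat by rewrite pnatr_eq0 -lt0n fact_gt0.
elim: j i => [|j IHj] i le_iN.
  by rewrite expr0 coef1 oppr0 expr0n; case: i le_iN => [|i] _; rewrite ?mul0r.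
rewrite exprSr coefM -natr1 opprD addrC exprDn mulr_suml.
apply: eq_bigr => -[l /= lt_li] _; have le_li : (l <= i)%N by [].
rewrite IHj ?(leq_trans le_li) // coef_exp_neg_trunc ?(leq_trans (leq_subr _ _)) //.
have bin_neq0 : 'C(i, l)%:R != 0 :> rat by rewrite pnatr_eq0 -lt0n bin_gt0.
rewrite -(bin_fact le_li) !natrM -mulr_natr; field.
by rewrite bin_neq0 !fact_neq0.
Qed.

Definition polyBern_neg (R : comNzRingType) (k n : nat) : R :=
  (-1) ^+ n * \sum_(m < n.+1) m.+1%:R ^+ k * altbin R m n.

Lemma polyBern_negE k n : polyBern (- k%:Z) n = polyBern_neg rat k n.
Proof.
rewrite /polyBern /polyBern_neg opprK coef_sum mulr_sumr mulr_sumr; apply: eq_bigr => m _.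
rewrite coefZ -exprnP mulrCA [RHS]mulrCA; congr (_ * _).
rewrite exprBn coef_sum !mulr_sumr; apply: eq_bigr => j _.
rewrite expr1n mulr1 coefMn -(rmorphN1 (@polyC rat)) -rmorphXn coefCM.
rewrite coef_exp_neg_truncX // exprNn !mulrnAr; congr (_ *+ _).
have fact_neq0 : n`!%:R != 0 :> rat by rewrite pnatr_eq0 -lt0n fact_gt0.
by field.
Qed.

Lemma rmorph_polyBern_neg (R S : comNzRingType) (f : {rmorphism R -> S}) k n :
  f (polyBern_neg R k n) = polyBern_neg S k n.
Proof.
rewrite rmorphM rmorphXn rmorphN1 rmorph_sum; congr (_ * _); apply: eq_bigr => m _.
by rewrite rmorphM rmorphXn rmorph_nat rmorph_altbin.
Qed.

Lemma polyBern_neg11 (R : comNzRingType) : polyBern_neg R 1 1 = 2.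
Proof.
rewrite /polyBern_neg big_ord_recr big_ord1 /= !altbin1 /= oppr0 mulr0 add0r.
by rewrite !expr1 mulrN1 mulN1r opprK.
Qed.

Lemma odd_eqmod d m n : ~~ odd d -> m = n %[mod d] -> odd m = odd n.
Proof. by move=> /negbTE d_even eq_mn; rewrite -(odd_mod m d_even) eq_mn odd_mod. Qed.

Section FiniteField.

Variable F : finFieldType.

Lemma expf_card_pred (x : F) : x != 0 -> x ^+ #|F|.-1 = 1.
Proof.
move=> x_neq0; apply: (mulIf x_neq0); rewrite mul1r -exprSr prednK ?expf_card //.
exact: ltnW (finNzRing_gt1 F).
Qed.

Lemma expf_modn_card_pred (x : F) a : x != 0 -> x ^+ (a %% #|F|.-1) = x ^+ a.
Proof.
move=> x_neq0; rewrite [in RHS](divn_eq a #|F|.-1) exprD mulnC exprM.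
by rewrite expf_card_pred // expr1n mul1r.
Qed.

Lemma expf_eqmod (x : F) a b : (0 < a)%N -> (0 < b)%N ->
  a = b %[mod #|F|.-1] -> x ^+ a = x ^+ b.
Proof.
move=> a_gt0 b_gt0 eq_ab; have [->|x_neq0] := eqVneq x 0.
  by rewrite !expr0n !eqn0Ngt a_gt0 b_gt0.
by rewrite -expf_modn_card_pred // eq_ab expf_modn_card_pred.
Qed.

End FiniteField.

Section PrimeField.

Variable p : nat.
Hypothesis p_pr : prime p.

Hypothesis p_odd : odd p.

Let pcharFp := pchar_Fp p_pr.
Let p_gt0 := prime_gt0 p_pr.
Let pred_gt0 : (0 < p.-1)%N. Proof. by rewrite -subn1 subn_gt0 prime_gt1. Qed.
Let pred_even : ~~ odd p.-1. Proof. by move: p_odd; rewrite -[p in odd p]prednK. Qed.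

Lemma natFp_neq0 m : (0 < m < p)%N -> (m%:R : 'F_p) != 0.
Proof. by case/andP=> m_gt0 lt_mp; rewrite -(dvdn_pcharf pcharFp) gtnNdvd. Qed.

Lemma expFp_pred (x : 'F_p) : x != 0 -> x ^+ p.-1 = 1.
Proof. by move/expf_card_pred; rewrite card_Fp. Qed.

Lemma expFp_eqmod (x : 'F_p) a b : (0 < a)%N -> (0 < b)%N ->
  a = b %[mod p.-1] -> x ^+ a = x ^+ b.
Proof. by move=> a_gt0 b_gt0 eq_ab; apply: expf_eqmod; rewrite ?card_Fp. Qed.

Lemma polyBern_neg_FpE k n : (0 < k)%N ->
  polyBern_neg 'F_p k n =
    (-1) ^+ n * \sum_(m < p.-1) m.+1%:R ^+ k * altbin 'F_p m n.
Proof.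
move=> k_gt0; congr (_ * _).
pose G m : 'F_p := m.+1%:R ^+ k * altbin 'F_p m n.
have G_gt_n m : (n.+1 <= m < n.+1 + p)%N -> G m = 0.
  by case/andP=> lt_nm _; rewrite /G altbin_small ?mulr0.
have G_ge_pred m : (p.-1 <= m < n.+1 + p)%N -> G m = 0.
  case/andP=> le_pm _; have [->|ne_pm] := eqVneq m p.-1.
    by rewrite /G prednK // (pcharf0 pcharFp) expr0n eqn0Ngt k_gt0 mul0r.
  by rewrite /G (altbin_pchar _ pcharFp) ?mulr0 // -[p]prednK // ltn_neqAle eq_sym ne_pm.
rewrite -(sumr_ord_trunc (leq_addr _ _) G_gt_n) (sumr_ord_trunc _ G_ge_pred) //.
by rewrite (leq_trans (leq_pred p)) ?leq_addl.
Qed.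

Lemma polyBern_neg_Fp_eqmod k n k' n' :
  (0 < k)%N -> (0 < n)%N -> (0 < k')%N -> (0 < n')%N ->
  k = k' %[mod p.-1] -> n = n' %[mod p.-1] ->
  polyBern_neg 'F_p k n = polyBern_neg 'F_p k' n'.
Proof.
move=> k_gt0 n_gt0 k'_gt0 n'_gt0 eq_k eq_n.
rewrite !polyBern_neg_FpE // -signr_odd (odd_eqmod pred_even eq_n) signr_odd.
congr (_ * _); apply: eq_bigr => m _; rewrite (expFp_eqmod _ k_gt0 k'_gt0 eq_k).
by congr (_ * _); apply: eq_bigr => j _; rewrite (expFp_eqmod _ n_gt0 n'_gt0 eq_n).
Qed.

Lemma altbin_Fp_pred m : (m < p)%N -> altbin 'F_p m p.-1 = (m == 0%N)%:R - 1.
Proof.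
move=> lt_mp; rewrite -altbin0 /altbin !big_ord_recl /= !expr0n eqn0Ngt pred_gt0 /=.
rewrite mulr0 mul0rn add0r expr0 mulr1 bin0 mulr1n addrC addKr.
apply: eq_bigr => j _; rewrite expr0 expFp_pred // natFp_neq0 //.
by rewrite /bump add1n (leq_ltn_trans (ltn_ord j) lt_mp).
Qed.

Lemma polyBern_neg_Fp_pred : polyBern_neg 'F_p p.-1 p.-1 = 2.
Proof.
rewrite polyBern_neg_FpE // -signr_odd (negbTE pred_even) expr0 mul1r.
rewrite (eq_bigr (fun m : 'I_p.-1 => (m == 0%N :> nat)%:R - 1)); last first.
  move=> m _; have lt_mp : (m.+1 < p)%N by rewrite -ltn_predRL.
  by rewrite expFp_pred ?mul1r ?altbin_Fp_pred ?natFp_neq0 // ltnW.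
rewrite sumrB -(prednK pred_gt0) big_ord_recl big1 // sumr_const card_ord /= prednK //.
have pred_Fp : p.-1%:R = -1 :> 'F_p.
  by apply/eqP; rewrite -addr_eq0 natr1 prednK // (pcharf0 pcharFp).
by rewrite pred_Fp addr0 opprK.
Qed.

End PrimeField.

Theorem theorem3p4 (p k n : nat) :
  prime p -> odd p -> (0 < k)%N -> (0 < n)%N ->
  ((k = 0 %[mod p.-1] /\ n = 0 %[mod p.-1]) \/
   (k = 1 %[mod p.-1] /\ n = 1 %[mod p.-1])) ->
  exists z : int, polyBern (- (k%:Z)) n = z%:~R /\ (z = 2 %[mod p%:Z])%Z.
Proof.
move=> p_pr p_odd k_gt0 n_gt0 k_n_eqmod.
have intr_polyBern_neg (R : comNzRingType) :
  (polyBern_neg int k n)%:~R = polyBern_neg R k n := rmorph_polyBern_neg intr k n.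
exists (polyBern_neg int k n); split; first by rewrite polyBern_negE intr_polyBern_neg.
apply/eqP; rewrite eqz_mod_dvd (dvdz_pcharf (pchar_Fp p_pr)) rmorphB /=.
rewrite intr_polyBern_neg subr_eq0 -[2%:~R]/(2 : 'F_p).
have pred_gt0 : (0 < p.-1)%N by rewrite -subn1 subn_gt0 prime_gt1.
apply/eqP; case: k_n_eqmod => [[k_eq0 n_eq0]|[k_eq1 n_eq1]].
  rewrite -(polyBern_neg_Fp_pred p_pr p_odd).
  by apply: (polyBern_neg_Fp_eqmod p_pr p_odd); rewrite // ?k_eq0 ?n_eq0 mod0n modnn.
by rewrite -(polyBern_neg11 'F_p); apply: (polyBern_neg_Fp_eqmod p_pr p_odd).
Qed.
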